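(* Let $\tilde\eta$ be the corner-flip dynamics on $\Omega^0_L$ started from $\eta_0\in\Omega_L^0$ with $\eta_0(x)\ge\min(x+L,\,L-x,\,L^{3/4})$ for all $x$. Then with probability tending to $1$ as $L\to\infty$, $$\tilde\eta(x,t)\ge-L^{3/4}\quad\forall x\in\{-L,\dots,L\},\ \forall t\in[0,\exp(L^{1/4})].$$
   Context: $\Omega^0_L$ is the set of $\eta\in\mathbb Z^{2L+1}$ indexed by $\{-L,\dots,L\}$ with $\eta_{-L}=\eta_L=0$ and $|\eta_{x+1}-\eta_x|=1$ (no sign constraint). For $x\in\{-L+1,\dots,L-1\}$, $\eta^{(x)}$ coincides with $\eta$ except at $x$, where $\eta^{(x)}_x=\eta_x+2$ if $\eta_{x\pm1}=\eta_x+1$, $\eta_x-2$ if $\eta_{x\pm1}=\eta_x-1$, $\eta_x$ otherwise. The corner-flip dynamics is the continuous-time Markov chain on $\Omega_L^0$ in which each site $x$ carries an independent rate-one Poisson clock and, when it rings, $\eta$ is replaced by $\eta^{(x)}$. *)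

From Stdlib Require Import Reals ZArith List.
Open Scope R_scope.

(** Integer range [a; b] as a list (empty if b < a). *)
Definition zrange (a b : Z) : list Z :=
  map (fun i => (a + Z.of_nat i)%Z) (seq 0 (Z.to_nat (b - a + 1))).

(** Configurations: eta : Z -> Z, only the values on {-L..L} matter. *)
Definition in_Omega0 (L : nat) (eta : Z -> Z) : Prop :=
  eta (- Z.of_nat L)%Z = 0%Z /\ eta (Z.of_nat L) = 0%Z /\
  (forall x : Z, (- Z.of_nat L <= x < Z.of_nat L)%Z ->
     Z.abs (eta (x + 1)%Z - eta x) = 1%Z).

Definition flip (eta : Z -> Z) (x : Z) : Z -> Z :=
  fun y =>
    if Z.eqb y x then
      (if andb (Z.eqb (eta (x - 1)%Z) (eta x + 1)%Z)
               (Z.eqb (eta (x + 1)%Z) (eta x + 1)%Z)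
       then (eta x + 2)%Z
       else if andb (Z.eqb (eta (x - 1)%Z) (eta x - 1)%Z)
                    (Z.eqb (eta (x + 1)%Z) (eta x - 1)%Z)
            then (eta x - 2)%Z
            else eta x)
    else eta y.

(** Interior sites {-L+1, ..., L-1}, carrying the clocks. *)
Definition sites (L : nat) : list Z :=
  zrange (- Z.of_nat L + 1)%Z (Z.of_nat L - 1)%Z.

Definition nclocks (L : nat) : R := INR (length (sites L)).

Definition good (L : nat) (eta : Z -> Z) : bool :=
  forallb (fun x => if Rle_dec (- Rpower (INR L) (3/4)) (IZR (eta x))
                    then true else false)
          (zrange (- Z.of_nat L)%Z (Z.of_nat L)).

Definition ind (b : bool) : R := if b then 1 else 0.

(** Probability that the (uniformized) jump chain, which at each clock ring
    picks a uniform site among the N interior sites and flips there, visits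
    only good configurations during its first k steps (states 0..k). *)
Fixpoint p_stay (L : nat) (k : nat) (eta : Z -> Z) : R :=
  match k with
  | O => ind (good L eta)
  | S k' => ind (good L eta) *
            (/ nclocks L * fold_right Rplus 0
               (map (fun x => p_stay L k' (flip eta x)) (sites L)))
  end.

(** Summand of the law of the corner-flip dynamics: the superposition of the
    N independent rate-one clocks is a Poisson process of rate N with iid
    uniform site marks; k rings occur in [0,T] with Poisson(N T) probability. *)
Definition stay_term (L : nat) (eta0 : Z -> Z) (T : R) (k : nat) : R :=
  exp (- (nclocks L * T)) * (nclocks L * T) ^ k / INR (fact k)
  * p_stay L k eta0.

(** P(eta(x,t) >= -L^{3/4} for all x, all t in [0,T]) is the sum over k of
    stay_term L eta0 T k. *)

(* Compare the corner-flip chain with its lazy version, which resamples the height at the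
   chosen site from the two admissible values (heat bath).  The heat-bath dynamics is monotone
   under the coupling that uses the same sites and coins for all configurations, and the uniform
   measure on Omega0_L is stationary for it.  Chernoff bounds for the simple random walk show that
   all but a fraction rho_L ~ 4 L^2 exp(-L^(1/2)/16) of the paths of Omega0_L stay above
   -L^(3/4) and below eta0.  Started from the paths below eta0 (at least half of them), the lazy
   chain escapes at least as often as from eta0, while by stationarity and a union bound it leaves
   the good set within k steps with probability at most (k+1) rho_L; so eta0 escapes within 2j lazy
   steps with probability at most 2(2j+1) rho_L.  Since 2j lazy steps contain j real steps with
   probability at least 1/2, the jump chain escapes within j steps with probability at most
   4(2j+1) rho_L.  Averaging over the Poisson(lambda_L) number of rings, lambda_L <= 2L exp(L^(1/4)),
   the failure probability is at most 4 rho_L (2 lambda_L + 1), which tends to 0. *)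

From Pilot Require Import Defs.
From Stdlib Require Import Reals ZArith List Lia Lra Permutation.
Open Scope R_scope.
Import ListNotations.

Definition lsum (l : list R) : R := fold_right Rplus 0 l.

Lemma lsum_app l1 l2 : lsum (l1 ++ l2) = lsum l1 + lsum l2.
Proof. induction l1 as [|a l1 IH]; simpl; [lra|]. unfold lsum in *; simpl; rewrite IH; lra. Qed.

Lemma lsum_perm l l' : Permutation l l' -> lsum l = lsum l'.
Proof. induction 1; unfold lsum in *; simpl; lra. Qed.

Lemma lsum_plus {A} (f g : A -> R) l :
  lsum (map (fun x => f x + g x) l) = lsum (map f l) + lsum (map g l).
Proof. induction l; unfold lsum in *; simpl; lra. Qed.

Lemma lsum_scal {A} (c : R) (f : A -> R) l :
  lsum (map (fun x => c * f x) l) = c * lsum (map f l).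
Proof. induction l; unfold lsum in *; simpl; lra. Qed.

Lemma lsum_const {A} (c : R) (l : list A) :
  lsum (map (fun _ => c) l) = c * INR (length l).
Proof.
  induction l as [|a l IH]; [unfold lsum; simpl; lra|].
  cbn [map length]. rewrite S_INR. unfold lsum in *; simpl. lra.
Qed.

Lemma lsum_ext {A} (f g : A -> R) l :
  (forall x, In x l -> f x = g x) -> lsum (map f l) = lsum (map g l).
Proof. intro H. f_equal. apply map_ext_in. exact H. Qed.

Lemma lsum_le {A} (f g : A -> R) l :
  (forall x, In x l -> f x <= g x) -> lsum (map f l) <= lsum (map g l).
Proof.
  induction l as [|a l IH]; intro H; unfold lsum in *; simpl; [lra|].
  assert (f a <= g a) by (apply H; left; reflexivity).
  assert (IH' := IH (fun x Hx => H x (or_intror Hx))). lra.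
Qed.

Lemma lsum_nonneg {A} (f : A -> R) l :
  (forall x, In x l -> 0 <= f x) -> 0 <= lsum (map f l).
Proof.
  intro H. rewrite <- (Rmult_0_l (INR (length l))), <- lsum_const.
  apply lsum_le. exact H.
Qed.

Lemma lsum_ge_elem {A} (f : A -> R) l x :
  In x l -> (forall y, In y l -> 0 <= f y) -> f x <= lsum (map f l).
Proof.
  induction l as [|a l IH]; simpl; intros Hx H; [contradiction|].
  assert (0 <= f a) by auto.
  assert (0 <= lsum (map f l)) by (apply lsum_nonneg; auto).
  unfold lsum in *; simpl.
  destruct Hx as [->|Hx]; [lra|].
  assert (f x <= fold_right Rplus 0 (map f l)) by (apply IH; auto). lra.
Qed.

Lemma lsum_swap {A B} (F : A -> B -> R) la lb :
  lsum (map (fun a => lsum (map (fun b => F a b) lb)) la) =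
  lsum (map (fun b => lsum (map (fun a => F a b) la)) lb).
Proof.
  induction la as [|a la IH]; simpl.
  - transitivity (lsum (map (fun _ : B => 0) lb)); [|reflexivity].
    rewrite lsum_const. unfold lsum; simpl. lra.
  - unfold lsum at 1; simpl. fold (lsum (map (fun a => lsum (map (fun b => F a b) lb)) la)).
    rewrite IH, <- lsum_plus. reflexivity.
Qed.

Lemma lsum_filter_le {A} (f : A -> R) (p : A -> bool) l :
  (forall x, In x l -> 0 <= f x) -> lsum (map f (filter p l)) <= lsum (map f l).
Proof.
  induction l as [|a l IH]; intro H; simpl; [lra|].
  assert (0 <= f a) by (apply H; left; reflexivity).
  assert (IH' := IH (fun x Hx => H x (or_intror Hx))).
  destruct (p a); unfold lsum in *; simpl; lra.
Qed.

Lemma lsum_mean_bounds {A} (f : A -> R) l :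
  (forall x, In x l -> 0 <= f x <= 1) ->
  0 <= / INR (length l) * lsum (map f l) <= 1.
Proof.
  intro H. destruct l as [|a l']; [unfold lsum; simpl; lra|].
  set (l := a :: l') in *.
  assert (Hn : 0 < INR (length l)) by (apply lt_0_INR; simpl; lia).
  assert (H0 : 0 <= lsum (map f l)) by (apply lsum_nonneg; intros; apply H; auto).
  assert (H1 : lsum (map f l) <= lsum (map (fun _ => 1) l)) by (apply lsum_le; intros; apply H; auto).
  rewrite lsum_const in H1. split.
  - apply Rmult_le_pos; [left; apply Rinv_0_lt_compat|]; assumption.
  - apply (Rmult_le_reg_l (INR (length l))); [exact Hn|].
    rewrite <- Rmult_assoc, Rinv_r by lra. lra.
Qed.

(** * Poisson mixtures *)

Definition poisson (lam : R) (k : nat) : R := exp (- lam) * lam ^ k / INR (fact k).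

Lemma poisson_nonneg lam k : 0 <= lam -> 0 <= poisson lam k.
Proof.
  intro H. unfold poisson. apply Rmult_le_pos.
  - apply Rmult_le_pos; [left; apply exp_pos | apply pow_le; exact H].
  - left; apply Rinv_0_lt_compat, INR_fact_lt_0.
Qed.

Lemma Un_cv_const c : Un_cv (fun _ => c) c.
Proof. intros e He. exists O. intros. rewrite Rdist_eq. lra. Qed.

Lemma poisson_partial_sums_cv lam : Un_cv (fun N => sum_f_R0 (poisson lam) N) 1.
Proof.
  assert (Hexp : exp_in lam (exp lam)) by exact (proj2_sig (exist_exp lam)).
  assert (Hprod := CV_mult _ _ _ _ (Un_cv_const (exp (- lam))) Hexp).
  replace 1 with (exp (- lam) * exp lam) by (rewrite <- exp_plus, Rplus_opp_l; apply exp_0).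
  intros e He. destruct (Hprod e He) as [N HN]. exists N. intros n Hn.
  replace (sum_f_R0 (poisson lam) n)
    with (exp (- lam) * sum_f_R0 (fun i => / INR (fact i) * lam ^ i) n); [apply HN; exact Hn|].
  rewrite scal_sum. apply sum_eq. intros. unfold poisson. field. apply INR_fact_neq_0.
Qed.

Lemma poisson_partial_sum_le lam N : 0 <= lam -> sum_f_R0 (poisson lam) N <= 1.
Proof.
  intro H. apply sum_incr; [apply poisson_partial_sums_cv|].
  intro; apply poisson_nonneg; exact H.
Qed.

Lemma poisson_succ lam k : poisson lam (S k) * INR (S k) = lam * poisson lam k.
Proof.
  unfold poisson. rewrite fact_simpl, mult_INR. simpl pow.
  assert (INR (fact k) <> 0) by apply INR_fact_neq_0.
  assert (INR (S k) <> 0) by (apply not_0_INR; lia).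
  field. auto.
Qed.

Lemma poisson_partial_mean lam K :
  sum_f_R0 (fun k => poisson lam k * INR k) K = lam * sum_f_R0 (poisson lam) K - lam * poisson lam K.
Proof. induction K; [simpl; ring|]. rewrite !tech5, IHK, poisson_succ. ring. Qed.

(* The defect is linear in [k] and the Poisson mean is [lam]. *)
Lemma poisson_mixture_bounds lam (p : nat -> R) c P : 0 <= lam -> 0 <= c ->
  (forall k, 0 <= p k <= 1) -> (forall k, 1 - p k <= c * (2 * INR k + 1)) ->
  Un_cv (fun N => sum_f_R0 (fun k => poisson lam k * p k) N) P ->
  1 - c * (2 * lam + 1) <= P <= 1.
Proof.
  intros Hl Hc Hp Hdefect HP. split.
  - apply Rle_cv_lim with (fun N => sum_f_R0 (poisson lam) N - c * (2 * lam + 1))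
                          (fun N => sum_f_R0 (fun k => poisson lam k * p k) N); try assumption.
    + intro N.
      assert (Hloss : sum_f_R0 (fun k => poisson lam k * (1 - p k)) N <= c * (2 * lam + 1)).
      { apply Rle_trans with (c * (2 * sum_f_R0 (fun k => poisson lam k * INR k) N
                                   + sum_f_R0 (poisson lam) N)).
        - replace (c * _) with (sum_f_R0 (fun k => poisson lam k * (c * (2 * INR k + 1))) N).
          + apply sum_Rle. intros k _. apply Rmult_le_compat_l; [apply poisson_nonneg; exact Hl|].
            apply Hdefect.
          + clear. induction N; [simpl; ring|]. rewrite !tech5, IHN. ring.
        - rewrite poisson_partial_mean. apply Rmult_le_compat_l; [exact Hc|].
          assert (B := poisson_partial_sum_le lam N Hl). assert (C := poisson_nonneg lam N Hl).
          assert (0 <= sum_f_R0 (poisson lam) N) by (apply cond_pos_sum; intro; apply poisson_nonneg; auto).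
          nra. }
      replace (sum_f_R0 (fun k => poisson lam k * p k) N)
        with (sum_f_R0 (poisson lam) N - sum_f_R0 (fun k => poisson lam k * (1 - p k)) N);
        [lra|].
      rewrite <- minus_sum. apply sum_eq. intros. ring.
    + apply CV_minus; [apply poisson_partial_sums_cv | apply Un_cv_const].
  - apply Rle_cv_lim with (fun N => sum_f_R0 (fun k => poisson lam k * p k) N)
                          (fun N => sum_f_R0 (poisson lam) N); try assumption.
    + intro N. apply sum_Rle. intros k _.
      assert (H0 := poisson_nonneg lam k Hl). specialize (Hp k). nra.
    + apply poisson_partial_sums_cv.
Qed.

Lemma poisson_mixture_cv lam (p : nat -> R) : 0 <= lam -> (forall k, 0 <= p k <= 1) ->
  {P | Un_cv (fun N => sum_f_R0 (fun k => poisson lam k * p k) N) P}.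
Proof.
  intros Hl Hp. apply Rseries_CV_comp with (poisson lam).
  - intro k. assert (A := poisson_nonneg lam k Hl). specialize (Hp k). nra.
  - exists 1. apply poisson_partial_sums_cv.
Qed.

(** * Configurations as up/down paths *)

Fixpoint bitstrings (n : nat) : list (list bool) :=
  match n with
  | O => [nil]
  | S n => map (cons true) (bitstrings n) ++ map (cons false) (bitstrings n)
  end.

Definition step (b : bool) : Z := if b then 1%Z else (-1)%Z.

Fixpoint height (s : list bool) (i : nat) {struct i} : Z :=
  match i, s with
  | S i, b :: s => (step b + height s i)%Z
  | _, _ => 0%Z
  end.

Fixpoint nups (s : list bool) : nat :=
  match s with nil => O | b :: s => ((if b then 1 else 0) + nups s)%nat end.

(* Exchanging steps [i] and [i+1] of a path is the corner flip at the vertex between them. *)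
Fixpoint swap_at (i : nat) (s : list bool) : list bool :=
  match i, s with
  | O, a :: b :: t => b :: a :: t
  | S i, a :: t => a :: swap_at i t
  | _, _ => s
  end.

Lemma In_bitstrings n s : In s (bitstrings n) <-> length s = n.
Proof.
  revert s; induction n as [|n IH]; intro s; simpl.
  - split; [intros [<-|[]]; reflexivity | destruct s; [auto | discriminate]].
  - rewrite in_app_iff, !in_map_iff. split.
    + intros [[x [<- Hx]]|[x [<- Hx]]]; simpl; f_equal; apply IH; exact Hx.
    + destruct s as [|b s]; [discriminate|]. intro H. injection H as H. apply IH in H.
      destruct b; [left|right]; exists s; auto.
Qed.

Lemma NoDup_bitstrings n : NoDup (bitstrings n).
Proof.
  induction n as [|n IH]; simpl; [repeat constructor; auto|].
  apply NoDup_app.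
  - apply NoDup_map_NoDup_ForallPairs; [intros x y _ _ H; injection H; auto | exact IH].
  - apply NoDup_map_NoDup_ForallPairs; [intros x y _ _ H; injection H; auto | exact IH].
  - intros a Ha Hb. apply in_map_iff in Ha, Hb.
    destruct Ha as [x [<- _]], Hb as [y [H _]]. discriminate.
Qed.

Lemma length_bitstrings n : length (bitstrings n) = (2 ^ n)%nat.
Proof. induction n; simpl; [reflexivity|]. rewrite length_app, !length_map, IHn. lia. Qed.

Lemma swap_at_involutive i s : swap_at i (swap_at i s) = s.
Proof. revert s; induction i as [|i IH]; intros [|a [|b t]]; simpl; rewrite ?IH; reflexivity. Qed.

Lemma swap_at_length i s : length (swap_at i s) = length s.
Proof. revert s; induction i as [|i IH]; intros [|a [|b t]]; simpl; rewrite ?IH; reflexivity. Qed.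

Lemma swap_at_nups i s : nups (swap_at i s) = nups s.
Proof.
  revert s; induction i as [|i IH]; intros [|a [|b t]]; simpl; rewrite ?IH; try reflexivity.
  destruct a, b; reflexivity.
Qed.

Lemma nups_le_length s : (nups s <= length s)%nat.
Proof. induction s as [|[] s IH]; simpl; lia. Qed.

(** [paths0 L] enumerates [Omega0_L] by the up/down steps of the height profile. *)
Definition paths0 (L : nat) : list (list bool) :=
  filter (fun s => Nat.eqb (nups s) L) (bitstrings (2 * L)).

Lemma In_paths0 L s : In s (paths0 L) <-> length s = (2 * L)%nat /\ nups s = L.
Proof. unfold paths0. rewrite filter_In, In_bitstrings, Nat.eqb_eq. tauto. Qed.

Lemma paths0_swap_at_perm L i : Permutation (map (swap_at i) (paths0 L)) (paths0 L).
Proof.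
  assert (Hinv : forall s, In s (paths0 L) -> In (swap_at i s) (paths0 L)).
  { intros s Hs. apply In_paths0 in Hs. apply In_paths0. rewrite swap_at_length, swap_at_nups. exact Hs. }
  assert (Hnd : NoDup (paths0 L)) by apply NoDup_filter, NoDup_bitstrings.
  apply NoDup_Permutation; [|exact Hnd|].
  - apply NoDup_map_NoDup_ForallPairs; [|exact Hnd].
    intros x y _ _ H. rewrite <- (swap_at_involutive i x), H, swap_at_involutive. reflexivity.
  - intro x. rewrite in_map_iff. split.
    + intros [y [<- Hy]]. apply Hinv, Hy.
    + intro Hx. exists (swap_at i x). rewrite swap_at_involutive. auto.
Qed.

Lemma height_S s i : (i < length s)%nat -> height s (S i) = (height s i + step (nth i s false))%Z.
Proof.
  revert i; induction s as [|b s IH]; intros i Hi; simpl in Hi; [lia|].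
  destruct i; [simpl; lia|].
  change (height (b :: s) (S (S i))) with (step b + height s (S i))%Z.
  change (height (b :: s) (S i)) with (step b + height s i)%Z.
  rewrite IH by lia. simpl nth. lia.
Qed.

Lemma height_length s : height s (length s) = (2 * Z.of_nat (nups s) - Z.of_nat (length s))%Z.
Proof.
  induction s as [|b s IH]; [reflexivity|].
  change (height (b :: s) (length (b :: s))) with (step b + height s (length s))%Z.
  rewrite IH. cbn [nups length]. destruct b; unfold step; lia.
Qed.

Lemma height_lipschitz s i j : (i <= j <= length s)%nat ->
  (Z.abs (height s j - height s i) <= Z.of_nat j - Z.of_nat i)%Z.
Proof.
  intros [Hij Hj]. induction j as [|j IH].
  - replace i with O by lia. simpl. lia.
  - destruct (Nat.eq_dec i (S j)) as [->|Hne]; [lia|].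
    rewrite height_S by lia. specialize (IH ltac:(lia) ltac:(lia)).
    destruct (nth j s false); unfold step; lia.
Qed.

Lemma height_swap_at_other i s j : (S (S i) <= length s)%nat -> j <> S i ->
  height (swap_at i s) j = height s j.
Proof.
  revert s j; induction i as [|i IH]; intros s j Hl Hj.
  - destruct s as [|a [|b t]]; simpl in Hl; try lia.
    destruct j as [|[|j]]; simpl; lia.
  - destruct s as [|a t]; simpl in Hl; [lia|].
    destruct j; simpl; [reflexivity|]. rewrite IH by lia. reflexivity.
Qed.

Lemma nth_swap_at i s : (S (S i) <= length s)%nat -> nth i (swap_at i s) false = nth (S i) s false.
Proof.
  revert s; induction i as [|i IH]; intros s Hl.
  - destruct s as [|a [|b t]]; simpl in Hl; try lia. reflexivity.
  - destruct s as [|a t]; simpl in Hl; [lia|]. apply IH. lia.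
Qed.

Lemma height_swap_at_mid i s : (S (S i) <= length s)%nat ->
  height (swap_at i s) (S i) = (height s i + step (nth (S i) s false))%Z.
Proof.
  intro Hl. rewrite height_S by (rewrite swap_at_length; lia).
  rewrite height_swap_at_other, nth_swap_at by lia. reflexivity.
Qed.

Definition path_conf (L : nat) (s : list bool) : Z -> Z :=
  fun y => height s (Z.to_nat (y + Z.of_nat L)).

Definition agree (L : nat) (e1 e2 : Z -> Z) : Prop :=
  forall y, (- Z.of_nat L <= y <= Z.of_nat L)%Z -> e1 y = e2 y.

Lemma In_zrange a b y : In y (zrange a b) <-> (a <= y <= b)%Z.
Proof.
  unfold zrange. rewrite in_map_iff. split.
  - intros [i [<- Hi]]. apply in_seq in Hi. lia.
  - intro H. exists (Z.to_nat (y - a)). split; [lia|]. apply in_seq. lia.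
Qed.

Lemma In_sites L x : In x (sites L) <-> (- Z.of_nat L + 1 <= x <= Z.of_nat L - 1)%Z.
Proof. apply In_zrange. Qed.

Lemma length_sites L : length (sites L) = (2 * L - 1)%nat.
Proof. unfold sites, zrange. rewrite length_map, length_seq. lia. Qed.

Ltac case_Zeqb := repeat match goal with |- context [Z.eqb ?a ?b] => destruct (Z.eqb_spec a b) end.

Lemma flip_path_conf L s x : length s = (2 * L)%nat -> In x (sites L) ->
  agree L (flip (path_conf L s) x) (path_conf L (swap_at (Z.to_nat (x + Z.of_nat L - 1)) s)).
Proof.
  intros Hl Hx. apply In_sites in Hx. intros y Hy.
  set (i := Z.to_nat (x + Z.of_nat L - 1)).
  unfold flip, path_conf. destruct (Z.eqb_spec y x) as [->|Hne].
  - replace (Z.to_nat (x + Z.of_nat L)) with (S i) by lia.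
    replace (Z.to_nat (x - 1 + Z.of_nat L)) with i by lia.
    replace (Z.to_nat (x + 1 + Z.of_nat L)) with (S (S i)) by lia.
    rewrite height_swap_at_mid, (height_S s (S i)), (height_S s i) by lia.
    destruct (nth i s false), (nth (S i) s false); simpl step; case_Zeqb; simpl; lia.
  - rewrite height_swap_at_other by lia. reflexivity.
Qed.

Lemma path_conf_Omega0 L s : In s (paths0 L) -> in_Omega0 L (path_conf L s).
Proof.
  intro H. apply In_paths0 in H. destruct H as [Hl Hn]. unfold in_Omega0, path_conf. split; [|split].
  - replace (Z.to_nat (- Z.of_nat L + Z.of_nat L)) with O by lia. reflexivity.
  - replace (Z.to_nat (Z.of_nat L + Z.of_nat L)) with (length s) by lia.
    rewrite height_length. lia.
  - intros x Hx. replace (Z.to_nat (x + 1 + Z.of_nat L)) with (S (Z.to_nat (x + Z.of_nat L))) by lia.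
    rewrite height_S by lia. destruct (nth _ s false); simpl; lia.
Qed.

Lemma path_conf_le_boundary L s y : In s (paths0 L) -> (- Z.of_nat L <= y <= Z.of_nat L)%Z ->
  (path_conf L s y <= y + Z.of_nat L /\ path_conf L s y <= Z.of_nat L - y)%Z.
Proof.
  intros H Hy. apply In_paths0 in H. destruct H as [Hl Hn]. unfold path_conf.
  set (j := Z.to_nat (y + Z.of_nat L)).
  assert (A := height_lipschitz s 0 j ltac:(lia)).
  assert (B := height_lipschitz s j (length s) ltac:(lia)).
  rewrite height_length in B. simpl in A. lia.
Qed.

Definition site_avg (L : nat) (f : (Z -> Z) -> R) (e : Z -> Z) : R :=
  / nclocks L * lsum (map (fun x => f (flip e x)) (sites L)).

Lemma p_stay_S L k e : p_stay L (S k) e = Defs.ind (good L e) * site_avg L (p_stay L k) e.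
Proof. reflexivity. Qed.

Fixpoint p_stay_lazy (L : nat) (k : nat) (e : Z -> Z) : R :=
  match k with
  | O => Defs.ind (good L e)
  | S k => Defs.ind (good L e) * (/2 * p_stay_lazy L k e + /2 * site_avg L (p_stay_lazy L k) e)
  end.

Lemma good_agree L e1 e2 : agree L e1 e2 -> good L e1 = good L e2.
Proof.
  intro H. unfold good.
  assert (Hin : forall x, In x (zrange (- Z.of_nat L) (Z.of_nat L)) -> e1 x = e2 x)
    by (intros x Hx; apply H, In_zrange, Hx).
  induction (zrange _ _) as [|a l IH]; simpl; [reflexivity|].
  rewrite Hin by (left; reflexivity).
  rewrite IH by (intros x Hx; apply Hin; right; exact Hx). reflexivity.
Qed.

Lemma flip_agree L e1 e2 x : agree L e1 e2 -> In x (sites L) -> agree L (flip e1 x) (flip e2 x).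
Proof.
  intros H Hx. apply In_sites in Hx. intros y Hy. unfold flip.
  rewrite (H x), (H (x - 1)%Z), (H (x + 1)%Z), (H y) by lia. reflexivity.
Qed.

Lemma site_avg_agree L f g e1 e2 :
  (forall x, In x (sites L) -> f (flip e1 x) = g (flip e2 x)) -> site_avg L f e1 = site_avg L g e2.
Proof. intro H. unfold site_avg. f_equal. apply lsum_ext. exact H. Qed.

Lemma p_stay_lazy_agree L k e1 e2 : agree L e1 e2 -> p_stay_lazy L k e1 = p_stay_lazy L k e2.
Proof.
  revert e1 e2; induction k as [|k IH]; intros e1 e2 H; simpl p_stay_lazy;
    rewrite (good_agree _ _ _ H); [reflexivity|].
  rewrite (IH e1 e2 H). do 3 f_equal.
  apply site_avg_agree. intros x Hx. apply IH, flip_agree; assumption.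
Qed.

Lemma ind_bounds (b : bool) : 0 <= Defs.ind b <= 1.
Proof. destruct b; simpl; lra. Qed.

Lemma site_avg_bounds L f e : (forall e', 0 <= f e' <= 1) -> 0 <= site_avg L f e <= 1.
Proof.
  intro H. unfold site_avg, nclocks.
  rewrite <- (length_map (fun x => f (flip e x))).
  assert (A := lsum_mean_bounds (fun r => r) (map (fun x => f (flip e x)) (sites L))).
  rewrite map_id in A. apply A. intros r Hr. apply in_map_iff in Hr. destruct Hr as [x [<- _]]. apply H.
Qed.

Lemma p_stay_bounds L k e : 0 <= p_stay L k e <= 1.
Proof.
  revert e; induction k as [|k IH]; intro e; [apply ind_bounds|].
  rewrite p_stay_S. assert (A := ind_bounds (good L e)). assert (B := site_avg_bounds L _ e IH). nra.
Qed.

Lemma p_stay_lazy_bounds L k e : 0 <= p_stay_lazy L k e <= 1.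
Proof.
  revert e; induction k as [|k IH]; intro e; [apply ind_bounds|]. simpl p_stay_lazy.
  assert (A := ind_bounds (good L e)). assert (B := site_avg_bounds L _ e IH). assert (C := IH e). nra.
Qed.

Lemma nclocks_pos L : (1 <= L)%nat -> 0 < nclocks L.
Proof. intro H. unfold nclocks. rewrite length_sites. apply lt_0_INR. lia. Qed.

Lemma site_avg_affine L f a b e : (1 <= L)%nat ->
  site_avg L (fun e' => a + b * f e') e = a + b * site_avg L f e.
Proof.
  intro HL. unfold site_avg. rewrite lsum_plus, lsum_const, lsum_scal.
  fold (nclocks L). assert (H := nclocks_pos L HL). field. lra.
Qed.

Lemma site_avg_le L f g e : (1 <= L)%nat ->
  (forall x, In x (sites L) -> f (flip e x) <= g (flip e x)) -> site_avg L f e <= site_avg L g e.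
Proof.
  intros HL H. unfold site_avg. apply Rmult_le_compat_l.
  - left; apply Rinv_0_lt_compat, nclocks_pos; exact HL.
  - apply lsum_le. exact H.
Qed.

(** [binom_tail k j] is the probability that a Binomial(k, 1/2) variable is at least [j]. *)
Fixpoint binom_tail (k j : nat) : R :=
  match k, j with
  | O, O => 1
  | O, S _ => 0
  | S _, O => 1
  | S k, S j' => /2 * binom_tail k j + /2 * binom_tail k j'
  end.

Lemma binom_tail_bounds k j : 0 <= binom_tail k j <= 1.
Proof.
  revert j; induction k as [|k IH]; intros [|j]; simpl; try lra.
  assert (A := IH (S j)); assert (B := IH j); lra.
Qed.

Lemma binom_tail_large k j : (k < j)%nat -> binom_tail k j = 0.
Proof.
  revert j; induction k as [|k IH]; intros [|j] H; simpl; try lia; [reflexivity|].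
  rewrite !IH by lia. lra.
Qed.

Lemma binom_tail_succ_le k j : binom_tail k (S j) <= binom_tail k j.
Proof.
  revert j; induction k as [|k IH]; intros [|j]; simpl; try lra.
  - assert (A := binom_tail_bounds k 1); assert (B := binom_tail_bounds k 0); lra.
  - assert (A := IH (S j)); assert (B := IH j); lra.
Qed.

Lemma binom_tail_sym k j : (j <= S k)%nat -> binom_tail k j + binom_tail k (S k - j) = 1.
Proof.
  revert j; induction k as [|k IH]; intros j H.
  - destruct j as [|[|j]]; simpl; lra || lia.
  - destruct j as [|j].
    + rewrite Nat.sub_0_r, (binom_tail_large (S k) (S (S k))) by lia. simpl; lra.
    + replace (S (S k) - S j)%nat with (S k - j)%nat by lia.
      destruct (Nat.eq_dec j (S k)) as [->|Hne].
      * rewrite Nat.sub_diag. simpl.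
        rewrite (binom_tail_large k (S (S k))), (binom_tail_large k (S k)) by lia. lra.
      * replace (S k - j)%nat with (S (k - j)) by lia. simpl binom_tail.
        assert (A := IH (S j) ltac:(lia)). assert (B := IH j ltac:(lia)).
        replace (S k - S j)%nat with (k - j)%nat in A by lia.
        replace (S k - j)%nat with (S (k - j)) in B by lia. lra.
Qed.

Lemma binom_tail_half j : / 2 <= binom_tail (2 * j) j.
Proof.
  assert (A := binom_tail_sym (2 * j) j ltac:(lia)).
  replace (S (2 * j) - j)%nat with (S j) in A by lia.
  assert (B := binom_tail_succ_le (2 * j) j). lra.
Qed.

(* The lazy chain after [k] steps has made at least [j] real steps with probability [binom_tail k j]. *)
Lemma lazy_escape_ge L k j e : (1 <= L)%nat ->
  binom_tail k j * (1 - p_stay L j e) <= 1 - p_stay_lazy L k e.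
Proof.
  intro HL. revert j e; induction k as [|k IH]; intros j e.
  - destruct j; simpl binom_tail; [simpl; lra|]. assert (A := p_stay_lazy_bounds L 0 e). lra.
  - assert (Hgood := ind_bounds (good L e)).
    assert (Hq := p_stay_lazy_bounds L k e).
    assert (Havg := site_avg_bounds L _ e (p_stay_lazy_bounds L k)).
    simpl p_stay_lazy. destruct j as [|j].
    + simpl binom_tail; simpl p_stay. nra.
    + rewrite p_stay_S. destruct (good L e) eqn:Hg; simpl Defs.ind in *.
      * assert (Hhold := IH (S j) e). rewrite p_stay_S, Hg in Hhold. simpl Defs.ind in Hhold.
        assert (Hmove : binom_tail k j * (1 - site_avg L (p_stay L j) e)
                        <= 1 - site_avg L (p_stay_lazy L k) e).
        { rewrite <- (Rmult_1_r (binom_tail k j)) at 1.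
          replace (1 - site_avg L (p_stay_lazy L k) e)
            with (site_avg L (fun e' => 1 + (-1) * p_stay_lazy L k e') e)
            by (rewrite site_avg_affine; [lra | exact HL]).
          replace (binom_tail k j * 1 * (1 - site_avg L (p_stay L j) e))
            with (site_avg L (fun e' => binom_tail k j + (- binom_tail k j) * p_stay L j e') e)
            by (rewrite site_avg_affine; [lra | exact HL]).
          apply site_avg_le; [exact HL|]. intros x _. assert (C := IH j (flip e x)). lra. }
        simpl binom_tail. lra.
      * assert (A := binom_tail_bounds (S k) (S j)). lra.
Qed.

(** * Monotonicity of the lazy chain *)

(* Heat-bath updates at [x]: the highest and the lowest value compatible with the neighbours. *)
Definition raise (x : Z) (e : Z -> Z) : Z -> Z :=
  fun y => if Z.eqb y x then (Z.min (e (x - 1)) (e (x + 1)) + 1)%Z else e y.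

Definition lower (x : Z) (e : Z -> Z) : Z -> Z :=
  fun y => if Z.eqb y x then (Z.max (e (x - 1)) (e (x + 1)) - 1)%Z else e y.

Definition conf_le (L : nat) (e1 e2 : Z -> Z) : Prop :=
  forall y, (- Z.of_nat L <= y <= Z.of_nat L)%Z -> (e1 y <= e2 y)%Z.

Lemma Omega0_neighbours L e x : in_Omega0 L e -> In x (sites L) ->
  (e (x - 1) = e x + 1 \/ e (x - 1) = e x - 1)%Z /\ (e (x + 1) = e x + 1 \/ e (x + 1) = e x - 1)%Z.
Proof.
  intros [_ [_ H]] Hx. apply In_sites in Hx.
  assert (A := H (x - 1)%Z ltac:(lia)). assert (B := H x ltac:(lia)).
  replace (x - 1 + 1)%Z with x in A by lia. lia.
Qed.

Lemma raise_lower_flip L e x : in_Omega0 L e -> In x (sites L) ->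
  (agree L (raise x e) e /\ agree L (lower x e) (flip e x)) \/
  (agree L (raise x e) (flip e x) /\ agree L (lower x e) e).
Proof.
  intros HO Hx. destruct (Omega0_neighbours L e x HO Hx) as [[A|A] [B|B]];
    [right | left | left | left]; split; intros y Hy; unfold raise, lower, flip;
    case_Zeqb; simpl; subst; lia.
Qed.

Lemma raise_Omega0 L e x : in_Omega0 L e -> In x (sites L) -> in_Omega0 L (raise x e).
Proof.
  intros HO Hx. destruct (Omega0_neighbours L e x HO Hx) as [A B].
  apply In_sites in Hx. destruct HO as [H1 [H2 H3]].
  split; [|split]; unfold raise; [case_Zeqb; lia | case_Zeqb; lia|].
  intros y Hy.
  destruct (Z.eq_dec y (x - 1)) as [->|Hne1]; [case_Zeqb; replace (x - 1 + 1)%Z with x by lia; lia|].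
  destruct (Z.eq_dec y x) as [->|Hne2]; [case_Zeqb; lia|].
  specialize (H3 y Hy). case_Zeqb; lia.
Qed.

Lemma lower_Omega0 L e x : in_Omega0 L e -> In x (sites L) -> in_Omega0 L (lower x e).
Proof.
  intros HO Hx. destruct (Omega0_neighbours L e x HO Hx) as [A B].
  apply In_sites in Hx. destruct HO as [H1 [H2 H3]].
  split; [|split]; unfold lower; [case_Zeqb; lia | case_Zeqb; lia|].
  intros y Hy.
  destruct (Z.eq_dec y (x - 1)) as [->|Hne1]; [case_Zeqb; replace (x - 1 + 1)%Z with x by lia; lia|].
  destruct (Z.eq_dec y x) as [->|Hne2]; [case_Zeqb; lia|].
  specialize (H3 y Hy). case_Zeqb; lia.
Qed.

Lemma raise_le L e1 e2 x : conf_le L e1 e2 -> In x (sites L) -> conf_le L (raise x e1) (raise x e2).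
Proof.
  intros H Hx. apply In_sites in Hx. intros y Hy. unfold raise.
  assert (A := H (x - 1)%Z ltac:(lia)). assert (B := H (x + 1)%Z ltac:(lia)). assert (C := H y Hy).
  case_Zeqb; lia.
Qed.

Lemma lower_le L e1 e2 x : conf_le L e1 e2 -> In x (sites L) -> conf_le L (lower x e1) (lower x e2).
Proof.
  intros H Hx. apply In_sites in Hx. intros y Hy. unfold lower.
  assert (A := H (x - 1)%Z ltac:(lia)). assert (B := H (x + 1)%Z ltac:(lia)). assert (C := H y Hy).
  case_Zeqb; lia.
Qed.

Lemma good_le L e1 e2 : conf_le L e1 e2 -> good L e1 = true -> good L e2 = true.
Proof.
  unfold good. rewrite !forallb_forall. intros H G x Hx.
  specialize (G x Hx). apply In_zrange in Hx. specialize (H x Hx).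
  destruct (Rle_dec _ (IZR (e1 x))) as [Hle|]; [|discriminate].
  destruct (Rle_dec _ (IZR (e2 x))) as [|Hnle]; [reflexivity|].
  exfalso. apply Hnle, (Rle_trans _ _ _ Hle), IZR_le, H.
Qed.

Lemma lazy_step_heat_bath L k e : (1 <= L)%nat -> in_Omega0 L e ->
  /2 * p_stay_lazy L k e + /2 * site_avg L (p_stay_lazy L k) e =
  / nclocks L * lsum (map (fun x => /2 * p_stay_lazy L k (raise x e) + /2 * p_stay_lazy L k (lower x e))
                          (sites L)).
Proof.
  intros HL HO.
  rewrite (lsum_ext _ (fun x => /2 * p_stay_lazy L k e + /2 * p_stay_lazy L k (flip e x))).
  - rewrite lsum_plus, lsum_const, !lsum_scal. unfold site_avg. fold (nclocks L).
    assert (H := nclocks_pos L HL). field. lra.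
  - intros x Hx. destruct (raise_lower_flip L e x HO Hx) as [[A B]|[A B]];
      rewrite (p_stay_lazy_agree L k _ _ A), (p_stay_lazy_agree L k _ _ B); lra.
Qed.

Lemma p_stay_lazy_monotone L k e1 e2 : (1 <= L)%nat ->
  in_Omega0 L e1 -> in_Omega0 L e2 -> conf_le L e1 e2 ->
  p_stay_lazy L k e1 <= p_stay_lazy L k e2.
Proof.
  intro HL. revert e1 e2; induction k as [|k IH]; intros e1 e2 H1 H2 H.
  - simpl. destruct (good L e1) eqn:G.
    + rewrite (good_le L e1 e2 H G). simpl; lra.
    + apply ind_bounds.
  - simpl p_stay_lazy. rewrite (lazy_step_heat_bath L k e1 HL H1), (lazy_step_heat_bath L k e2 HL H2).
    set (A1 := / nclocks L * _). set (A2 := / nclocks L * _).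
    assert (Hinv : 0 < / nclocks L) by (apply Rinv_0_lt_compat, nclocks_pos, HL).
    assert (HA : A1 <= A2).
    { apply Rmult_le_compat_l; [lra|]. apply lsum_le. intros x Hx.
      assert (U := IH _ _ (raise_Omega0 L e1 x H1 Hx) (raise_Omega0 L e2 x H2 Hx) (raise_le L e1 e2 x H Hx)).
      assert (D := IH _ _ (lower_Omega0 L e1 x H1 Hx) (lower_Omega0 L e2 x H2 Hx) (lower_le L e1 e2 x H Hx)).
      lra. }
    assert (H0 : 0 <= A1).
    { apply Rmult_le_pos; [lra|]. apply lsum_nonneg. intros x _.
      assert (P1 := p_stay_lazy_bounds L k (raise x e1)).
      assert (P2 := p_stay_lazy_bounds L k (lower x e1)). lra. }
    destruct (good L e1) eqn:G.
    + rewrite (good_le L e1 e2 H G). simpl. lra.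
    + simpl. assert (B := ind_bounds (good L e2)). nra.
Qed.

(** * Stationarity and coupling *)

(* The corner flip at a site permutes [paths0 L], so the uniform measure is invariant. *)
Lemma site_avg_uniform L f : (1 <= L)%nat -> (forall e1 e2, agree L e1 e2 -> f e1 = f e2) ->
  lsum (map (fun s => site_avg L f (path_conf L s)) (paths0 L)) =
  lsum (map (fun s => f (path_conf L s)) (paths0 L)).
Proof.
  intros HL Hf. unfold site_avg. rewrite lsum_scal, lsum_swap.
  rewrite (lsum_ext _ (fun _ => lsum (map (fun s => f (path_conf L s)) (paths0 L)))).
  - rewrite lsum_const. fold (nclocks L). assert (H := nclocks_pos L HL). field. lra.
  - intros x Hx.
    rewrite (lsum_ext _ (fun s => f (path_conf L (swap_at (Z.to_nat (x + Z.of_nat L - 1)) s)))).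
    + rewrite <- (map_map (swap_at _) (fun s => f (path_conf L s))).
      apply lsum_perm, Permutation_map, paths0_swap_at_perm.
    + intros s Hs. apply Hf, flip_path_conf; [|exact Hx]. apply In_paths0 in Hs. tauto.
Qed.

Definition bad_mass (L : nat) : R :=
  lsum (map (fun s => 1 - Defs.ind (good L (path_conf L s))) (paths0 L)).

(* Union bound over the [k+1] times, each of them distributed uniformly. *)
Lemma lazy_escape_uniform_le L k : (1 <= L)%nat ->
  lsum (map (fun s => 1 - p_stay_lazy L k (path_conf L s)) (paths0 L)) <= INR (S k) * bad_mass L.
Proof.
  intro HL. induction k as [|k IH]; [simpl; unfold bad_mass; lra|].
  assert (Hbad : 0 <= bad_mass L).
  { apply lsum_nonneg. intros s _. assert (A := ind_bounds (good L (path_conf L s))). lra. }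
  apply Rle_trans with (lsum (map (fun s => (1 - Defs.ind (good L (path_conf L s))) +
     (/2 * (1 - p_stay_lazy L k (path_conf L s))
      + /2 * site_avg L (fun e => 1 + (-1) * p_stay_lazy L k e) (path_conf L s))) (paths0 L))).
  - apply lsum_le. intros s _. simpl p_stay_lazy. rewrite site_avg_affine by exact HL.
    assert (A := p_stay_lazy_bounds L k (path_conf L s)).
    assert (C := site_avg_bounds L _ (path_conf L s) (p_stay_lazy_bounds L k)).
    destruct (good L (path_conf L s)); simpl; lra.
  - rewrite !lsum_plus, !lsum_scal. fold (bad_mass L).
    rewrite (site_avg_uniform L (fun e => 1 + (-1) * p_stay_lazy L k e) HL)
      by (intros e1 e2 H; rewrite (p_stay_lazy_agree L k _ _ H); reflexivity).
    rewrite (lsum_ext (fun s => 1 + -1 * p_stay_lazy L k (path_conf L s))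
                      (fun s => 1 - p_stay_lazy L k (path_conf L s))) by (intros; ring).
    rewrite S_INR. lra.
Qed.

Definition below (L : nat) (e0 : Z -> Z) (s : list bool) : bool :=
  forallb (fun y => Z.leb (path_conf L s y) (e0 y)) (zrange (- Z.of_nat L) (Z.of_nat L)).

Definition below_mass (L : nat) (e0 : Z -> Z) : R :=
  lsum (map (fun s => Defs.ind (below L e0 s)) (paths0 L)).

(* Monotone coupling: each path below [e0] escapes at least as often as [e0] itself. *)
Lemma below_mass_escape_le L k e0 : (1 <= L)%nat -> in_Omega0 L e0 ->
  below_mass L e0 * (1 - p_stay_lazy L k e0) <=
  lsum (map (fun s => 1 - p_stay_lazy L k (path_conf L s)) (paths0 L)).
Proof.
  intros HL H0. unfold below_mass. rewrite Rmult_comm, <- lsum_scal. apply lsum_le. intros s Hs.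
  assert (A := p_stay_lazy_bounds L k e0). assert (B := p_stay_lazy_bounds L k (path_conf L s)).
  destruct (below L e0 s) eqn:E; simpl; [|lra].
  assert (p_stay_lazy L k (path_conf L s) <= p_stay_lazy L k e0); [|lra].
  apply p_stay_lazy_monotone; [exact HL | apply path_conf_Omega0, Hs | exact H0 |].
  intros y Hy. unfold below in E. rewrite forallb_forall in E.
  apply Z.leb_le, E, In_zrange, Hy.
Qed.

Lemma escape_le_below_mass L j e0 : (1 <= L)%nat -> in_Omega0 L e0 ->
  below_mass L e0 * (1 - p_stay L j e0) <= 2 * (2 * INR j + 1) * bad_mass L.
Proof.
  intros HL H0.
  assert (Hk := lazy_escape_ge L (2 * j) j e0 HL). assert (Hb := binom_tail_half j).
  assert (Hc := below_mass_escape_le L (2 * j) e0 HL H0).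
  assert (Hs := lazy_escape_uniform_le L (2 * j) HL).
  replace (INR (S (2 * j))) with (2 * INR j + 1) in Hs by (rewrite S_INR, mult_INR; simpl; ring).
  assert (Pp := p_stay_bounds L j e0).
  assert (Hbm : 0 <= below_mass L e0) by (apply lsum_nonneg; intros; apply ind_bounds).
  assert (Hhalf : (1 - p_stay L j e0) <= 2 * (1 - p_stay_lazy L (2 * j) e0)) by nra.
  assert (below_mass L e0 * (1 - p_stay L j e0) <= below_mass L e0 * (2 * (1 - p_stay_lazy L (2 * j) e0)))
    by (apply Rmult_le_compat_l; assumption).
  lra.
Qed.

(** * Chernoff bounds for heights *)

Lemma lsum_exp_height n i th : (i <= n)%nat ->
  lsum (map (fun s => exp (th * IZR (height s i))) (bitstrings n)) = (exp th + exp (- th)) ^ i * 2 ^ (n - i).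
Proof.
  revert i; induction n as [|n IH]; intros i Hi.
  - replace i with O by lia. unfold lsum; simpl. rewrite Rmult_0_r, exp_0. lra.
  - simpl bitstrings. rewrite map_app, lsum_app, !map_map. destruct i as [|i].
    + specialize (IH 0%nat ltac:(lia)). simpl height in *. rewrite IH, Nat.sub_0_r. simpl. lra.
    + rewrite (lsum_ext _ (fun s => exp th * exp (th * IZR (height s i)))),
              (lsum_ext (fun s => exp (th * IZR (height (false :: s) (S i))))
                        (fun s => exp (- th) * exp (th * IZR (height s i)))).
      * rewrite !lsum_scal, IH by lia. simpl. ring.
      * intros s _. cbn [height step]. rewrite plus_IZR, <- exp_plus. f_equal. ring.
      * intros s _. cbn [height step]. rewrite plus_IZR, <- exp_plus. f_equal. ring.
Qed.

Lemma exp_le_inv_1_minus th : th < 1 -> exp th <= / (1 - th).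
Proof.
  intro H. assert (A := exp_ineq1_le (- th)).
  assert (B : exp th * exp (- th) = 1) by (rewrite <- exp_plus, Rplus_opp_r; apply exp_0).
  assert (C := exp_pos th).
  apply (Rmult_le_reg_r (1 - th)); [lra|]. rewrite Rinv_l by lra. nra.
Qed.

Lemma cosh_le th : - / 2 <= th <= / 2 -> exp th + exp (- th) <= 2 * exp (2 * th ^ 2).
Proof.
  intro H. assert (A := exp_le_inv_1_minus th ltac:(lra)).
  assert (B := exp_le_inv_1_minus (- th) ltac:(lra)).
  assert (C := exp_ineq1_le (2 * th ^ 2)).
  assert (D : / (1 - th) + / (1 - - th) <= 2 * (1 + 2 * th ^ 2)).
  { replace (/ (1 - th) + / (1 - - th)) with (2 / (1 - th ^ 2)) by (field; split; nra).
    apply (Rmult_le_reg_r (1 - th ^ 2)); [nra|]. unfold Rdiv.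
    rewrite Rmult_assoc, Rinv_l by nra. assert (th ^ 2 <= / 4) by nra. assert (0 <= th ^ 2) by nra. nra. }
  lra.
Qed.

Lemma exp_pow a i : exp a ^ i = exp (INR i * a).
Proof.
  induction i as [|i IH]; [simpl; rewrite Rmult_0_l, exp_0; reflexivity|].
  rewrite S_INR. simpl. rewrite IH, <- exp_plus. f_equal. ring.
Qed.

Lemma exp_monotone a b : a <= b -> exp a <= exp b.
Proof. intros [H|H]; [left; apply exp_increasing, H | rewrite H; right; reflexivity]. Qed.

(* Exponential Markov inequality for [sg * height], with [cosh th <= exp (2 th^2)]. *)
Lemma height_tail_sum_le n i th m (f : Z -> R) sg : (i <= n)%nat -> 0 <= th <= / 2 ->
  (sg = 1 \/ sg = -1) -> (forall h, 0 <= f h <= exp (sg * th * IZR h - th * m)) ->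
  lsum (map (fun s => f (height s i)) (bitstrings n)) <= 2 ^ n * exp (2 * INR n * th ^ 2 - th * m).
Proof.
  intros Hi Hth Hsg Hf.
  apply Rle_trans with (lsum (map (fun s => exp (- th * m) * exp (sg * th * IZR (height s i))) (bitstrings n))).
  { apply lsum_le. intros s _. rewrite <- exp_plus. replace (- th * m + sg * th * IZR (height s i)) with (sg * th * IZR (height s i) - th * m) by ring. apply Hf. }
  rewrite lsum_scal, lsum_exp_height by exact Hi.
  assert (Hcosh : exp (sg * th) + exp (- (sg * th)) <= 2 * exp (2 * th ^ 2)).
  { replace (th ^ 2) with ((sg * th) ^ 2) by (destruct Hsg; subst; ring).
    apply cosh_le. destruct Hsg; subst; lra. }
  assert (Hpos : 0 <= exp (sg * th) + exp (- (sg * th))).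
  { assert (A := exp_pos (sg * th)). assert (B := exp_pos (- (sg * th))). lra. }
  assert (Hexcess : 1 <= exp (2 * (INR n - INR i) * th ^ 2)).
  { rewrite <- exp_0. apply exp_monotone.
    assert (INR i <= INR n) by (apply le_INR, Hi). nra. }
  apply Rle_trans with (exp (- th * m) * ((2 * exp (2 * th ^ 2)) ^ i * 2 ^ (n - i))).
  { apply Rmult_le_compat_l; [left; apply exp_pos|].
    apply Rmult_le_compat_r; [apply pow_le; lra|]. apply pow_incr. auto. }
  rewrite Rpow_mult_distr, exp_pow.
  replace (2 ^ n) with (2 ^ i * 2 ^ (n - i)) by (rewrite <- pow_add; f_equal; lia).
  replace (2 * INR n * th ^ 2 - th * m)
    with ((- th * m + INR i * (2 * th ^ 2)) + 2 * (INR n - INR i) * th ^ 2) by ring.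
  rewrite !exp_plus.
  assert (0 < exp (- th * m) * exp (INR i * (2 * th ^ 2)) * 2 ^ i * 2 ^ (n - i)).
  { repeat apply Rmult_lt_0_compat; try apply exp_pos; apply pow_lt; lra. }
  nra.
Qed.

Lemma paths0_tail_sum_le L th m (f : Z -> R) sg : 0 <= th <= / 2 -> (sg = 1 \/ sg = -1) ->
  (forall h, 0 <= f h <= exp (sg * th * IZR h - th * m)) ->
  lsum (map (fun s => lsum (map (fun i => f (height s i)) (seq 0 (S (2 * L))))) (paths0 L)) <=
  INR (S (2 * L)) * (2 ^ (2 * L) * exp (2 * INR (2 * L) * th ^ 2 - th * m)).
Proof.
  intros Hth Hsg Hf.
  apply Rle_trans with
    (lsum (map (fun s => lsum (map (fun i => f (height s i)) (seq 0 (S (2 * L))))) (bitstrings (2 * L)))).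
  { apply lsum_filter_le. intros. apply lsum_nonneg. intros. apply Hf. }
  rewrite lsum_swap.
  replace (INR (S (2 * L)) * _)
    with (lsum (map (fun _ => 2 ^ (2 * L) * exp (2 * INR (2 * L) * th ^ 2 - th * m)) (seq 0 (S (2 * L)))))
    by (rewrite lsum_const, length_seq; ring).
  apply lsum_le. intros i Hi. apply in_seq in Hi.
  apply height_tail_sum_le with sg; auto. lia.
Qed.

Definition count_ups (n k : nat) : nat := length (filter (fun s => Nat.eqb (nups s) k) (bitstrings n)).

Lemma length_filter_map {A B} (p : B -> bool) (g : A -> B) l :
  length (filter p (map g l)) = length (filter (fun x => p (g x)) l).
Proof. induction l as [|a l IH]; simpl; [reflexivity|]. destruct (p (g a)); simpl; auto. Qed.

Lemma count_ups_S_S n k : count_ups (S n) (S k) = (count_ups n k + count_ups n (S k))%nat.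
Proof. unfold count_ups. simpl bitstrings. rewrite filter_app, length_app, !length_filter_map. reflexivity. Qed.

Lemma count_ups_0 n : count_ups n 0 = 1%nat.
Proof.
  unfold count_ups. induction n as [|n IH]; [reflexivity|].
  simpl bitstrings. rewrite filter_app, length_app, !length_filter_map, <- IH. simpl.
  rewrite filter_false. simpl. lia.
Qed.

Lemma count_ups_large n k : (n < k)%nat -> count_ups n k = 0%nat.
Proof.
  revert k; induction n as [|n IH]; intros [|k] H; try lia; [reflexivity|].
  rewrite count_ups_S_S, !IH by lia. reflexivity.
Qed.

Lemma C_0 n : C n 0 = 1.
Proof. unfold C. rewrite Nat.sub_0_r. simpl. field. apply INR_fact_neq_0. Qed.

Lemma C_diag n : C n n = 1.
Proof. unfold C. rewrite Nat.sub_diag. simpl. field. apply INR_fact_neq_0. Qed.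

Lemma count_ups_C n k : (k <= n)%nat -> INR (count_ups n k) = C n k.
Proof.
  revert k; induction n as [|n IH]; intros [|k] Hk; try lia.
  - rewrite count_ups_0, C_0. reflexivity.
  - rewrite count_ups_0, C_0. reflexivity.
  - rewrite count_ups_S_S, plus_INR. destruct (Nat.eq_dec k n) as [->|Hne].
    + rewrite (count_ups_large n (S n)), IH, !C_diag by lia. simpl. ring.
    + rewrite !IH by lia. apply pascal. lia.
Qed.

Lemma C_pos n k : 0 < C n k.
Proof.
  unfold C. apply Rdiv_lt_0_compat; [apply INR_fact_lt_0|].
  apply Rmult_lt_0_compat; apply INR_fact_lt_0.
Qed.

Lemma C_le_C_central L k : (k <= L)%nat -> C (2 * L) k <= C (2 * L) L.
Proof.
  intro Hk. remember (L - k)%nat as d eqn:Hd. revert k Hk Hd.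
  induction d as [|d IH]; intros k Hk Hd; [replace k with L by lia; lra|].
  apply Rle_trans with (C (2 * L) (S k)); [|apply IH; lia].
  rewrite pascal_step3 by lia. assert (Hpos := C_pos (2 * L) k).
  assert (Hratio : 1 <= INR (2 * L - k) / INR (S k)).
  { assert (Hs : 0 < INR (S k)) by (apply lt_0_INR; lia).
    apply (Rmult_le_reg_r (INR (S k))); [exact Hs|].
    unfold Rdiv. rewrite Rmult_assoc, Rinv_l, Rmult_1_l, Rmult_1_r by lra. apply le_INR. lia. }
  nra.
Qed.

Lemma C_le_central L k : (k <= 2 * L)%nat -> C (2 * L) k <= C (2 * L) L.
Proof.
  intro Hk. destruct (Nat.le_gt_cases k L) as [Hle|Hgt]; [apply C_le_C_central, Hle|].
  rewrite pascal_step1 by exact Hk. apply C_le_C_central. lia.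
Qed.

(* The central binomial coefficient is the largest of the [2L+1] terms summing to [4^L]. *)
Lemma paths0_length_ge L : 2 ^ (2 * L) <= INR (S (2 * L)) * INR (length (paths0 L)).
Proof.
  change (length (paths0 L)) with (count_ups (2 * L) L). rewrite count_ups_C by lia.
  replace 2 with (1 + 1) at 1 by ring. rewrite binomial, Rmult_comm, <- sum_cte.
  apply sum_Rle. intros k Hk. rewrite !pow1, !Rmult_1_r. apply C_le_central, Hk.
Qed.

(** * Most paths are good and lie below the initial profile *)

Definition quarter (L : nat) : R := Rpower (INR L) (1/4).

Lemma quarter_facts L : (1 <= L)%nat ->
  1 <= quarter L /\ INR L = quarter L ^ 4 /\ Rpower (INR L) (3/4) = quarter L ^ 3.
Proof.
  intro HL. assert (HL' : 1 <= INR L) by (apply (le_INR 1), HL).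
  unfold quarter. split; [|split].
  - apply Rle_trans with (Rpower (INR L) 0); [rewrite Rpower_O; lra | apply Rle_Rpower; lra].
  - rewrite <- Rpower_pow, Rpower_mult by (apply exp_pos).
    replace (1 / 4 * INR 4) with 1 by (simpl; field). rewrite Rpower_1; lra.
  - rewrite <- Rpower_pow, Rpower_mult by (apply exp_pos). f_equal. simpl. field.
Qed.

Definition above_truncated_tent (L : nat) (e0 : Z -> Z) : Prop :=
  forall x : Z, (- Z.of_nat L <= x <= Z.of_nat L)%Z ->
    Rmin (IZR x + INR L) (Rmin (INR L - IZR x) (Rpower (INR L) (3/4))) <= IZR (e0 x).

Definition ind_below (m : R) (h : Z) : R := if Rlt_dec (IZR h) (- m) then 1 else 0.
Definition ind_above (m : R) (h : Z) : R := if Rlt_dec m (IZR h) then 1 else 0.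

Lemma ind_below_le_exp m th h : 0 <= th -> 0 <= ind_below m h <= exp (-1 * th * IZR h - th * m).
Proof.
  intro Hth. assert (E := exp_pos (-1 * th * IZR h - th * m)). unfold ind_below.
  destruct (Rlt_dec _ _); split; try lra.
  apply Rle_trans with (1 + (-1 * th * IZR h - th * m)); [nra | apply exp_ineq1_le].
Qed.

Lemma ind_above_le_exp m th h : 0 <= th -> 0 <= ind_above m h <= exp (1 * th * IZR h - th * m).
Proof.
  intro Hth. assert (E := exp_pos (1 * th * IZR h - th * m)). unfold ind_above.
  destruct (Rlt_dec _ _); split; try lra.
  apply Rle_trans with (1 + (1 * th * IZR h - th * m)); [nra | apply exp_ineq1_le].
Qed.

Lemma forallb_false_exists {A} (f : A -> bool) l : forallb f l = false -> exists x, In x l /\ f x = false.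
Proof.
  induction l as [|a l IH]; simpl; [discriminate|]. intro H. destruct (f a) eqn:E.
  - destruct (IH H) as [x [Hx Hf]]. eauto.
  - eauto.
Qed.

Lemma bad_le_low_points L s :
  1 - Defs.ind (good L (path_conf L s)) <=
  lsum (map (fun i => ind_below (Rpower (INR L) (3/4)) (height s i)) (seq 0 (S (2 * L)))).
Proof.
  assert (Hnn : forall i, 0 <= ind_below (Rpower (INR L) (3/4)) i)
    by (intro i; unfold ind_below; destruct (Rlt_dec _ _); lra).
  assert (0 <= lsum (map (fun i => ind_below (Rpower (INR L) (3/4)) (height s i)) (seq 0 (S (2 * L)))))
    by (apply lsum_nonneg; auto).
  destruct (good L (path_conf L s)) eqn:E; simpl Defs.ind; [lra|].
  apply forallb_false_exists in E. destruct E as [y [Hy Ey]]. apply In_zrange in Hy.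
  destruct (Rle_dec _ _) as [|Hn]; [discriminate|].
  apply Rle_trans with (ind_below (Rpower (INR L) (3/4)) (height s (Z.to_nat (y + Z.of_nat L)))).
  - unfold ind_below. destruct (Rlt_dec _ _) as [|Hn2]; [lra|]. exfalso. apply Hn. unfold path_conf. lra.
  - apply (lsum_ge_elem (fun i => ind_below _ (height s i))); [apply in_seq; lia | auto].
Qed.

Lemma not_below_le_high_points L e0 s : In s (paths0 L) -> above_truncated_tent L e0 ->
  1 - Defs.ind (below L e0 s) <=
  lsum (map (fun i => ind_above (Rpower (INR L) (3/4)) (height s i)) (seq 0 (S (2 * L)))).
Proof.
  intros Hs H0.
  assert (Hnn : forall i, 0 <= ind_above (Rpower (INR L) (3/4)) i)
    by (intro i; unfold ind_above; destruct (Rlt_dec _ _); lra).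
  assert (0 <= lsum (map (fun i => ind_above (Rpower (INR L) (3/4)) (height s i)) (seq 0 (S (2 * L)))))
    by (apply lsum_nonneg; auto).
  destruct (below L e0 s) eqn:E; simpl Defs.ind; [lra|].
  apply forallb_false_exists in E. destruct E as [y [Hy Ey]]. apply In_zrange in Hy. apply Z.leb_gt in Ey.
  apply Rle_trans with (ind_above (Rpower (INR L) (3/4)) (path_conf L s y)).
  - unfold ind_above. destruct (Rlt_dec _ _) as [|Hle]; [lra|]. exfalso. apply Rnot_lt_le in Hle.
    destruct (path_conf_le_boundary L s y Hs Hy) as [B1 B2].
    assert (C1 : IZR (path_conf L s y) <= IZR y + INR L) by (rewrite INR_IZR_INZ, <- plus_IZR; apply IZR_le; lia).
    assert (C2 : IZR (path_conf L s y) <= INR L - IZR y) by (rewrite INR_IZR_INZ, <- minus_IZR; apply IZR_le; lia).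
    assert (C3 : IZR (e0 y) < IZR (path_conf L s y)) by (apply IZR_lt; lia).
    assert (IZR (path_conf L s y) <= Rmin (IZR y + INR L) (Rmin (INR L - IZR y) (Rpower (INR L) (3/4))))
      by (repeat apply Rmin_glb; assumption).
    specialize (H0 y Hy). lra.
  - apply (lsum_ge_elem (fun i => ind_above _ (height s i))); [apply in_seq; lia | auto].
Qed.

Definition bad_fraction (L : nat) : R := INR (S (2 * L)) ^ 2 * exp (- quarter L ^ 2 / 16).

(* Chernoff with [th = 1 / (8 L^(1/4))] gives the exponent [2 (2L) th^2 - th L^(3/4) = - L^(1/2) / 16]. *)
Lemma paths0_tail_le L (f : Z -> R) sg : (1 <= L)%nat -> (sg = 1 \/ sg = -1) ->
  (forall h, 0 <= f h <= exp (sg * / (8 * quarter L) * IZR h - / (8 * quarter L) * Rpower (INR L) (3/4))) ->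
  lsum (map (fun s => lsum (map (fun i => f (height s i)) (seq 0 (S (2 * L))))) (paths0 L)) <=
  bad_fraction L * INR (length (paths0 L)).
Proof.
  intros HL Hsg Hf. destruct (quarter_facts L HL) as [Hu [HLu Hm]].
  set (th := / (8 * quarter L)) in Hf.
  assert (Hth : 0 <= th <= / 2).
  { unfold th. split; [left; apply Rinv_0_lt_compat; lra|].
    apply Rinv_le_contravar; lra. }
  assert (Hexp : 2 * INR (2 * L) * th ^ 2 - th * Rpower (INR L) (3/4) = - quarter L ^ 2 / 16).
  { rewrite Hm, mult_INR, HLu. unfold th. simpl (INR 2). field. lra. }
  assert (HM := paths0_length_ge L).
  eapply Rle_trans; [apply (paths0_tail_sum_le L th _ f sg Hth Hsg Hf)|].
  rewrite Hexp. unfold bad_fraction.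
  assert (Hn : 0 <= INR (S (2 * L))) by apply pos_INR.
  assert (He := exp_pos (- quarter L ^ 2 / 16)).
  replace (INR (S (2 * L)) ^ 2 * exp (- quarter L ^ 2 / 16) * INR (length (paths0 L)))
    with (INR (S (2 * L)) * ((INR (S (2 * L)) * INR (length (paths0 L))) * exp (- quarter L ^ 2 / 16)))
    by ring.
  apply Rmult_le_compat_l; [exact Hn|]. apply Rmult_le_compat_r; lra.
Qed.

Lemma bad_mass_le L : (1 <= L)%nat -> bad_mass L <= bad_fraction L * INR (length (paths0 L)).
Proof.
  intro HL. eapply Rle_trans; [apply lsum_le; intros s _; apply bad_le_low_points|].
  apply paths0_tail_le with (-1); [exact HL | right; reflexivity |].
  intro h. apply ind_below_le_exp. destruct (quarter_facts L HL) as [Hu _].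
  left; apply Rinv_0_lt_compat; lra.
Qed.

Lemma not_below_mass_le L e0 : (1 <= L)%nat -> above_truncated_tent L e0 ->
  INR (length (paths0 L)) - below_mass L e0 <= bad_fraction L * INR (length (paths0 L)).
Proof.
  intros HL H0.
  replace (INR (length (paths0 L)) - below_mass L e0)
    with (lsum (map (fun s => 1 - Defs.ind (below L e0 s)) (paths0 L))).
  - eapply Rle_trans; [apply lsum_le; intros s Hs; apply not_below_le_high_points; assumption|].
    apply paths0_tail_le with 1; [exact HL | left; reflexivity |].
    intro h. apply ind_above_le_exp. destruct (quarter_facts L HL) as [Hu _].
    left; apply Rinv_0_lt_compat; lra.
  - unfold below_mass.
    rewrite (lsum_ext _ (fun s => 1 + (-1) * Defs.ind (below L e0 s))) by (intros; ring).
    rewrite lsum_plus, lsum_scal, lsum_const. ring.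
Qed.

(* Once at least half of the paths lie below [e0], the union bound costs at most a factor 2. *)
Lemma escape_le L e0 j : (1 <= L)%nat -> in_Omega0 L e0 -> above_truncated_tent L e0 ->
  bad_fraction L <= / 2 -> 1 - p_stay L j e0 <= 4 * bad_fraction L * (2 * INR j + 1).
Proof.
  intros HL HO H0 Hrho.
  set (M := INR (length (paths0 L))).
  assert (HMpos : 0 < M).
  { assert (HM := paths0_length_ge L). fold M in HM. assert (0 < 2 ^ (2 * L)) by (apply pow_lt; lra).
    assert (0 <= M) by apply pos_INR. assert (0 < INR (S (2 * L))) by (apply lt_0_INR; lia). nra. }
  assert (HG : M / 2 <= below_mass L e0).
  { assert (A := not_below_mass_le L e0 HL H0). fold M in A.
    assert (bad_fraction L * M <= / 2 * M) by (apply Rmult_le_compat_r; lra). lra. }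
  assert (HB := bad_mass_le L HL). fold M in HB.
  assert (Hesc := escape_le_below_mass L j e0 HL HO).
  assert (Hp := p_stay_bounds L j e0).
  assert (Hj : 0 <= 2 * INR j + 1) by (assert (0 <= INR j) by apply pos_INR; lra).
  assert (M / 2 * (1 - p_stay L j e0) <= 2 * (2 * INR j + 1) * (bad_fraction L * M)).
  { apply Rle_trans with (below_mass L e0 * (1 - p_stay L j e0)); [apply Rmult_le_compat_r; lra|].
    eapply Rle_trans; [exact Hesc|]. apply Rmult_le_compat_l; lra. }
  apply (Rmult_le_reg_l (M / 2)); [lra|].
  replace (M / 2 * (4 * bad_fraction L * (2 * INR j + 1)))
    with (2 * (2 * INR j + 1) * (bad_fraction L * M)) by field.
  assumption.
Qed.

Definition poisson_param (L : nat) : R := nclocks L * exp (quarter L).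

Lemma poisson_param_nonneg L : 0 <= poisson_param L.
Proof. apply Rmult_le_pos; [apply pos_INR | left; apply exp_pos]. Qed.

Lemma failure_bound_le L : (1 <= L)%nat ->
  4 * bad_fraction L * (2 * poisson_param L + 1)
  <= 180 * quarter L ^ 12 * exp (quarter L - quarter L ^ 2 / 16).
Proof.
  intro HL. destruct (quarter_facts L HL) as [Hu1 [HLu _]].
  unfold bad_fraction, poisson_param. set (u := quarter L) in *.
  set (a := INR L) in *. set (x := exp u). set (y := exp (- u ^ 2 / 16)).
  assert (Ha : 1 <= a) by (apply (le_INR 1), HL).
  assert (Hx : 1 <= x) by (apply Rle_trans with (1 + u); [lra | apply exp_ineq1_le]).
  assert (Hy : 0 < y) by apply exp_pos.
  assert (Hn1 : INR (S (2 * L)) = 2 * a + 1) by (unfold a; rewrite S_INR, mult_INR; simpl; ring).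
  assert (HN : 0 <= nclocks L <= 2 * a).
  { unfold nclocks, a. rewrite length_sites. split; [apply pos_INR|].
    apply Rle_trans with (INR (2 * L)); [apply le_INR; lia | rewrite mult_INR; simpl; lra]. }
  rewrite Hn1.
  replace (exp (u - u ^ 2 / 16)) with (x * y) by (unfold x, y; rewrite <- exp_plus; f_equal; field).
  replace (u ^ 12) with (a ^ 3) by (rewrite HLu; ring).
  assert (A1 : (2 * a + 1) ^ 2 <= 9 * a ^ 2) by nra.
  assert (A2 : 2 * (nclocks L * x) + 1 <= 5 * a * x) by nra.
  apply Rle_trans with (4 * (9 * a ^ 2 * y) * (5 * a * x)); [|right; ring].
  apply Rmult_le_compat; [nra | nra | | exact A2].
  apply Rmult_le_compat_l; [lra|]. apply Rmult_le_compat_r; lra.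
Qed.

(* For [u >= 32], [exp (u - u^2/16) <= exp (- u^2/32)] and [exp (u^2/32) >= (u^2/224)^7]. *)
Lemma poly_exp_decay_eventually_lt d : 0 < d ->
  exists U, forall u, U <= u -> 180 * u ^ 12 * exp (u - u ^ 2 / 16) < d.
Proof.
  intro Hd. set (K := 180 * 224 ^ 7).
  assert (HK : 0 < K) by (unfold K; apply Rmult_lt_0_compat; [lra | apply pow_lt; lra]).
  exists (Rmax 32 (K / d + 1)). intros u Hu.
  assert (H32 : 32 <= u) by (eapply Rle_trans; [apply Rmax_l | exact Hu]).
  assert (HKd : K / d + 1 <= u) by (eapply Rle_trans; [apply Rmax_r | exact Hu]).
  set (y := u ^ 2 / 32).
  assert (E1 : exp (u - u ^ 2 / 16) <= / exp y) by (rewrite <- exp_Ropp; apply exp_monotone; unfold y; nra).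
  assert (E2 : u ^ 14 / 224 ^ 7 <= exp y).
  { replace (exp y) with (exp (y / 7) ^ 7) by (rewrite exp_pow; f_equal; simpl; field).
    replace (u ^ 14 / 224 ^ 7) with ((y / 7) ^ 7) by (unfold y; field).
    assert (0 <= y / 7) by (unfold y; nra). assert (A := exp_ineq1_le (y / 7)).
    apply pow_incr. lra. }
  assert (P14 : 0 < u ^ 14 / 224 ^ 7) by (apply Rdiv_lt_0_compat; apply pow_lt; lra).
  assert (E3 : / exp y <= 224 ^ 7 / u ^ 14).
  { replace (224 ^ 7 / u ^ 14) with (/ (u ^ 14 / 224 ^ 7)) by (field; lra).
    apply Rinv_le_contravar; assumption. }
  assert (P12 : 0 < u ^ 12) by (apply pow_lt; lra).
  apply Rle_lt_trans with (180 * u ^ 12 * (224 ^ 7 / u ^ 14)); [apply Rmult_le_compat_l; lra|].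
  replace (180 * u ^ 12 * (224 ^ 7 / u ^ 14)) with (K / u ^ 2) by (unfold K; field; lra).
  apply Rle_lt_trans with (K / u).
  { apply Rmult_le_compat_l; [lra|]. apply Rinv_le_contravar; nra. }
  apply (Rmult_lt_reg_r u); [lra|]. unfold Rdiv. rewrite Rmult_assoc, Rinv_l, Rmult_1_r by lra.
  rewrite (Rmult_comm d u). replace K with (K / d * d) at 1 by (field; lra). apply Rmult_lt_compat_r; lra.
Qed.

Lemma failure_bound_eventually_lt d : 0 < d -> exists N, forall L, (N <= L)%nat -> (1 <= L)%nat ->
  4 * bad_fraction L * (2 * poisson_param L + 1) < d.
Proof.
  intro Hd. destruct (poly_exp_decay_eventually_lt d Hd) as [U HU].
  destruct (INR_unbounded (U ^ 4)) as [N HN]. exists N. intros L HNL HL.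
  destruct (quarter_facts L HL) as [Hu [HLu _]].
  eapply Rle_lt_trans; [apply failure_bound_le, HL|]. apply HU.
  destruct (Rle_lt_dec U (quarter L)) as [|Hlt]; [assumption|]. exfalso.
  assert (A := pow_incr (quarter L) U 4 ltac:(lra)).
  assert (INR N <= INR L) by (apply le_INR, HNL). lra.
Qed.

Theorem lemmaA1 :
  forall eta0 : nat -> Z -> Z,
    (forall L : nat, (1 <= L)%nat ->
       in_Omega0 L (eta0 L) /\
       (forall x : Z, (- Z.of_nat L <= x <= Z.of_nat L)%Z ->
          Rmin (IZR x + INR L) (Rmin (INR L - IZR x) (Rpower (INR L) (3/4)))
            <= IZR (eta0 L x))) ->
    exists P : nat -> R,
      (forall L : nat, (1 <= L)%nat ->
         infinite_sum
           (stay_term L (eta0 L) (exp (Rpower (INR L) (1/4)))) (P L)) /\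
      Un_cv P 1.
Proof.
  intros eta0 Hyp.
  set (series L := poisson_mixture_cv (poisson_param L) (fun k => p_stay L k (eta0 L))
                     (poisson_param_nonneg L) (fun k => p_stay_bounds L k (eta0 L))).
  exists (fun L => proj1_sig (series L)). split.
  - intros L _. exact (proj2_sig (series L)).
  - intros eps Heps.
    destruct (failure_bound_eventually_lt (Rmin eps (/ 2))) as [N HN]; [apply Rmin_pos; lra|].
    exists (max N 1). intros L HNL.
    assert (HL : (1 <= L)%nat) by lia.
    destruct (Hyp L HL) as [HO H0].
    specialize (HN L ltac:(lia) HL).
    assert (Hrho0 : 0 <= bad_fraction L)
      by (apply Rmult_le_pos; [apply pow_le, pos_INR | left; apply exp_pos]).
    assert (Hlam := poisson_param_nonneg L).
    assert (Hrho : bad_fraction L <= / 2).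
    { assert (bad_fraction L <= 4 * bad_fraction L * (2 * poisson_param L + 1)) by nra.
      assert (Rmin eps (/ 2) <= / 2) by apply Rmin_r. lra. }
    assert (Hbounds := poisson_mixture_bounds (poisson_param L) _ (4 * bad_fraction L) _ Hlam
                         ltac:(lra) (fun k => p_stay_bounds L k (eta0 L))
                         (fun j => escape_le L (eta0 L) j HL HO H0 Hrho) (proj2_sig (series L))).
    assert (Rmin eps (/ 2) <= eps) by apply Rmin_l.
    unfold Rdist. apply Rabs_def1; lra.
Qed.
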